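(* Let $X$ be a nonempty set, let $w$ be a convex metric modular on $X$, let $x_0\in X$ and let $X_w^*=\{x\in X:\exists\,\lambda>0,\ w_\lambda(x,x_0)<\infty\}$. Let $T\colon X_w^*\to X_w^*$ be a map and let $k\in(0,1)$, $\lambda_0>0$ be such that $w_{k\lambda}(Tx,Ty)\le w_\lambda(x,y)$ for all $0<\lambda\le\lambda_0$ and all $x,y\in X_w^*$. Let $0<\lambda<\lambda_0$ and let $\lambda_1,\lambda_2>0$ with $\lambda_1+\lambda_2=(1-k)\lambda$. Then $$w_\lambda(x,y)\le \frac{\lambda_1 w_{\lambda_1}(x,Tx)+\lambda_2 w_{\lambda_2}(y,Ty)}{\lambda(1-k)}$$ for every $x,y\in X_w^*$ such that $w_\lambda(x,y)<\infty$.
   Context: A metric modular on a nonempty set $X$ is a function $w\colon(0,\infty)\times X\times X\to[0,\infty]$, written $(\lambda,x,y)\mapsto w_\lambda(x,y)$, such that for all $x,y,z\in X$: (1) $w_\lambda(x,y)=0$ for all $\lambda>0$ if and only if $x=y$; (2) $w_\lambda(x,y)=w_\lambda(y,x)$ for all $\lambda>0$; (3) $w_{\lambda+\mu}(x,y)\le w_\lambda(x,z)+w_\mu(y,z)$ for all $\lambda,\mu>0$. The modular $w$ is convex if it satisfies $w_{\lambda+\mu}(x,y)\le \frac{\lambda}{\lambda+\mu}w_\lambda(x,z)+\frac{\mu}{\lambda+\mu}w_\mu(z,y)$ for all $\lambda,\mu>0$ and all $x,y,z\in X$. Arithmetic is in $[0,\infty]$. *)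

From HB Require Import structures.
From mathcomp Require Import all_boot all_order all_algebra.
From mathcomp Require Import boolp classical_sets reals constructive_ereal ereal.
Set Implicit Arguments. Unset Strict Implicit. Unset Printing Implicit Defensive.
Import Order.TTheory GRing.Theory Num.Theory.
Local Open Scope ring_scope.
Local Open Scope ereal_scope.

(* A modular w : (0,oo) x X x X -> [0,oo]; modelled as a function on R whose
   values for lambda <= 0 are irrelevant. *)
Definition metric_modular (R : realType) (X : Type) (w : R -> X -> X -> \bar R) : Prop :=
  (forall (l : R) x y, (0 < l)%R -> 0 <= w l x y) /\
  (forall x y, (forall l : R, (0 < l)%R -> w l x y = 0) <-> x = y) /\
  (forall (l : R) x y, (0 < l)%R -> w l x y = w l y x) /\
  (forall (l m : R) x y z, (0 < l)%R -> (0 < m)%R ->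
      w (l + m)%R x y <= w l x z + w m y z).

Definition convex_modular (R : realType) (X : Type) (w : R -> X -> X -> \bar R) : Prop :=
  forall (l m : R) x y z, (0 < l)%R -> (0 < m)%R ->
    w (l + m)%R x y <= (l / (l + m))%:E * w l x z + (m / (l + m))%:E * w m z y.

Definition modular_set (R : realType) (X : Type) (w : R -> X -> X -> \bar R) (x0 : X)
  : set X := [set x | exists l : R, (0 < l)%R /\ w l x x0 < +oo].

From HB Require Import structures.
From mathcomp Require Import all_boot all_order all_algebra.
From mathcomp Require Import boolp classical_sets reals constructive_ereal ereal.
From mathcomp Require Import ring lra.
Set Implicit Arguments.
Import Order.TTheory GRing.Theory Num.Theory.
Local Open Scope ring_scope.
Local Open Scope ereal_scope.

(* Split lam = lam1 + (k lam + lam2).  Convexity through Tx and then through Ty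
   bounds lam w_lam(x,y) by lam1 w_lam1(x,Tx) + k lam w_{k lam}(Tx,Ty)
   + lam2 w_lam2(y,Ty), and contraction replaces w_{k lam}(Tx,Ty) by
   w_lam(x,y).  As w_lam(x,y) is finite, the term k lam w_lam(x,y) can be
   absorbed into the left-hand side. *)

Section ConvexModular.
Variables (R : realType) (X : Type) (w : R -> X -> X -> \bar R).
Hypothesis w_ge0 : forall (l : R) x y, (0 < l)%R -> 0 <= w l x y.
Hypothesis w_convex : convex_modular w.

Lemma convex_modular_scaled {l m : R} (x y z : X) : (0 < l)%R -> (0 < m)%R ->
  (l + m)%:E * w (l + m) x y <= l%:E * w l x z + m%:E * w m z y.
Proof.
move=> l0 m0; have lm0 : (0 < l + m)%R by rewrite addr_gt0.
have -> : l%:E * w l x z + m%:E * w m z y =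
    (l + m)%:E * ((l / (l + m))%:E * w l x z + (m / (l + m))%:E * w m z y).
  rewrite ge0_muleDr ?mule_ge0 ?lee_fin ?divr_ge0 ?w_ge0 ?ltW // !muleA -!EFinM.
  by congr (_%:E * _ + _%:E * _); field; rewrite gt_eqF.
by rewrite lee_pmul2l ?lte_fin // w_convex.
Qed.

End ConvexModular.

Lemma lee_absorb_fin (R : realType) (a b r : R) (s : \bar R) : (b < a)%R ->
  (a * r)%:E <= s + (b * r)%:E -> r%:E <= ((a - b)^-1)%:E * s.
Proof.
move=> ba; have ab0 : (0 < (a - b)^-1)%R by rewrite invr_gt0 subr_gt0.
case: s => [s | | ] /=; last by rewrite leeNy_eq.
- rewrite -EFinD -EFinM !lee_fin => ars.
  by rewrite ler_pdivlMl ?subr_gt0 // mulrBl lerBlDr.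
- by move=> _; rewrite mulry gtr0_sg // mul1e leey.
Qed.

Theorem proposition4p3 (R : realType) (X : Type) (w : R -> X -> X -> \bar R) (x0 : X)
  (T : X -> X) (k lam0 lam lam1 lam2 : R) :
  metric_modular w -> convex_modular w ->
  (forall x, modular_set w x0 x -> modular_set w x0 (T x)) ->
  (0 < k)%R -> (k < 1)%R -> (0 < lam0)%R ->
  (forall (l : R) x y, (0 < l)%R -> (l <= lam0)%R ->
     modular_set w x0 x -> modular_set w x0 y ->
     w (k * l)%R (T x) (T y) <= w l x y) ->
  (0 < lam)%R -> (lam < lam0)%R -> (0 < lam1)%R -> (0 < lam2)%R ->
  (lam1 + lam2 = (1 - k) * lam)%R ->
  forall x y, modular_set w x0 x -> modular_set w x0 y -> w lam x y < +oo ->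
    w lam x y <= ((lam * (1 - k))^-1)%:E *
                   (lam1%:E * w lam1 x (T x) + lam2%:E * w lam2 y (T y)).
Proof.
move=> [w_ge0 [_ [w_sym _]]] w_cvx _ k0 k1 _ contr lam_gt0 lam_lt l1_gt0 l2_gt0
  lam12 x y xs ys w_fin.
have klam_gt0 : (0 < k * lam)%R by rewrite mulr_gt0.
have m_gt0 : (0 < k * lam + lam2)%R by rewrite addr_gt0.
have lam_split : lam = (lam1 + (k * lam + lam2))%R by lra.
have through_Tx := convex_modular_scaled w_ge0 w_cvx x y (T x) l1_gt0 m_gt0.
have through_Ty := convex_modular_scaled w_ge0 w_cvx (T x) y (T y) klam_gt0 l2_gt0.
rewrite (w_sym lam2 (T y)) // in through_Ty.
have contr_lam := contr lam x y lam_gt0 (ltW lam_lt) xs ys.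
have := w_ge0 lam x y lam_gt0; move: w_fin through_Tx; rewrite -lam_split.
case: (w lam x y) contr_lam => [r | | //] contr_lam _ through_Tx _ //.
have -> : (lam * (1 - k) = lam - k * lam)%R by ring.
apply: lee_absorb_fin; first lra.
rewrite EFinM; apply: (le_trans through_Tx).
rewrite addeAC -addeA; apply: leeD2l; apply: (le_trans through_Ty); apply: leeD2r.
by rewrite [leRHS]EFinM lee_pmul2l // lte_fin.
Qed.
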